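(* Let $\beta_2\in(0,1)$, $\epsilon>0$, and let $g_1,g_2,\dots$ be random vectors in $\mathbb{R}^D$ with $\mathbb{E}\|g_t\|^2\le G^2$ for all $t\ge1$. Define $v_0=0$, $v_t=\beta_2v_{t-1}+(1-\beta_2)g_t\odot g_t$ for $t\ge1$. Then for every $T\ge1$, $$\sum_{t=1}^T\mathbb{E}\left[\left\|\frac{g_t}{\sqrt{v_t+\epsilon^2}}\right\|^2\right]\le\frac{D}{1-\beta_2}\left(\log\Big(1+\frac{(1-\beta_2^T)G^2}{\epsilon^2}\Big)-T\log\beta_2\right).$$
   Context: $\odot$, square root, division and addition of a scalar act elementwise; norms are Euclidean. These are the second-moment estimates of RMSprop. *)

From HB Require Import structures.
From mathcomp Require Import all_boot all_order all_algebra.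
From mathcomp Require Import all_classical all_reals all_analysis.
Set Implicit Arguments. Unset Strict Implicit. Unset Printing Implicit Defensive.
Import Order.TTheory GRing.Theory Num.Theory.
Local Open Scope ring_scope.

Fixpoint rms_v {R : realType} {Omega : Type} {D : nat}
  (beta2 : R) (g : nat -> 'I_D -> Omega -> R) (t : nat) (i : 'I_D) (x : Omega) : R :=
  match t with
  | 0 => 0
  | t'.+1 => beta2 * rms_v beta2 g t' i x + (1 - beta2) * (g t'.+1 i x) ^+ 2
  end.

From HB Require Import structures.
From mathcomp Require Import all_boot all_order all_algebra.
From mathcomp Require Import all_classical all_reals all_analysis.
From mathcomp Require Import measurable_realfun ring lra.
Import Order.TTheory GRing.Theory Num.Theory.
Local Open Scope ring_scope.

(* Fix a coordinate and write v_t for the second-moment estimate and e = eps^2.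
   Since v_t + e - b (v_(t-1) + e) = (1 - b) (g_t^2 + e), the inequality
   1 - 1/y <= ln y gives (1 - b) g_t^2 / (v_t + e) <= ln (v_t + e) - ln (v_(t-1) + e) - ln b,
   which telescopes to ln (1 + v_T / e) - T ln b.  Bounding ln by its tangent at
   1 + M / e, with M = (1 - b^T) G^2, makes the bound affine in v_T, and the
   recursion is linear, so E[sum_i v_T,i] <= M. *)

Section EmaLnBounds.
Context {R : realType}.
Implicit Types y c : R.

Lemma ln_le_subr1 y : 0 < y -> ln y <= y - 1.
Proof. by move=> y0; have := @le_ln1Dx R (y - 1); rewrite addrCA subrr addr0; apply; lra. Qed.

Lemma ln_ge_1subrV y : 0 < y -> 1 - y^-1 <= ln y.
Proof.
move=> y0; have := @ln_le_subr1 y^-1; rewrite invr_gt0 lnV ?posrE // => /(_ y0).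
lra.
Qed.

Lemma ln_le_tangent y c : 0 < y -> 0 < c -> ln y <= ln c + (y - c) / c.
Proof.
move=> y0 c0; have := @ln_le_subr1 (y / c) (divr_gt0 y0 c0).
rewrite lnM ?posrE ?invr_gt0 // lnV ?posrE // mulrBl divff ?gt_eqF //; lra.
Qed.

Lemma ema_ratio_le_ln_step {b e u a : R} :
  0 < b < 1 -> 0 < e -> 0 <= u -> 0 <= a ->
  (1 - b) * a / (b * u + (1 - b) * a + e)
    <= ln (b * u + (1 - b) * a + e) - ln (u + e) - ln b.
Proof.
move=> /andP[b0 b1] e0 u0 a0.
set w := b * u + (1 - b) * a + e.
have ue0 : 0 < u + e by rewrite ltr_wpDl.
have b1' : 0 <= 1 - b by rewrite subr_ge0 ltW.
have w0 : 0 < w by rewrite /w ltr_wpDl // addr_ge0 // mulr_ge0 // ltW.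
have := @ln_ge_1subrV (w / (b * (u + e))) (divr_gt0 w0 (mulr_gt0 b0 ue0)).
rewrite invf_div lnM ?posrE ?invr_gt0 ?mulr_gt0 // lnV ?posrE ?mulr_gt0 //.
rewrite lnM ?posrE //.
suff : (1 - b) * a / w <= 1 - b * (u + e) / w by lra.
have -> : 1 - b * (u + e) / w = (w - b * (u + e)) / w by field; rewrite gt_eqF.
rewrite ler_pM2r ?invr_gt0 // /w.
by have := mulr_ge0 b1' (ltW e0); lra.
Qed.

Lemma ema_ratio_sum_le (b e : R) (a v : nat -> R) :
  0 < b < 1 -> 0 < e -> (forall t, 0 <= a t) -> v 0%N = 0 ->
  (forall t, v t.+1 = b * v t + (1 - b) * a t.+1) ->
  forall T, (1 - b) * \sum_(1 <= t < T.+1) a t / (v t + e)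
              <= ln (1 + v T / e) - T%:R * ln b.
Proof.
move=> b01 e0 a0 v0 vS; have /andP[b0 b1] := b01.
have v_ge0 t : 0 <= v t.
  elim: t => [|t IH]; first by rewrite v0.
  by rewrite vS addr_ge0 // mulr_ge0 // ?subr_ge0 ltW.
have lnE t : ln (1 + v t / e) = ln (v t + e) - ln e.
  rewrite -[1](divff (lt0r_neq0 e0)) -mulrDl addrC.
  by rewrite lnM ?posrE ?invr_gt0 ?ltr_wpDl // lnV ?posrE.
elim=> [|T IH]; first by rewrite big_geq // mulr0 v0 mul0r addr0 ln1 mul0r subr0.
have step := ema_ratio_le_ln_step b01 e0 (v_ge0 T) (a0 T.+1).
rewrite -vS -mulrA in step.
rewrite big_nat_recr //= mulrDr !lnE -natr1 mulrDl mul1r.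
rewrite lnE in IH; lra.
Qed.

End EmaLnBounds.

Lemma measurable_funV_gt0 d (T : measurableType d) (R : realType) (h : T -> R) :
  measurable_fun setT h -> (forall x, 0 < h x) ->
  measurable_fun setT (fun x => (h x)^-1).
Proof.
move=> mh h_gt0.
have minv : measurable_fun (`]0, +oo[%classic : set R) (@GRing.inv R).
  apply: open_continuous_measurable_fun; first exact: interval_open.
  move=> x; rewrite inE /= in_itv /= andbT => x_gt0.
  by apply: inv_continuous; rewrite gt_eqF.
have h_pos : (range h `<=` (`]0, +oo[%classic : set R))%classic.
  by move=> _ [x _ <-]; rewrite /= in_itv /= andbT.
exact: (measurable_comp (measurable_itv _) h_pos minv mh).
Qed.

Lemma probability_integralD_cst d (T : measurableType d) (R : realType)
    (P : probability T R) (f : T -> R) (c : R) :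
  measurable_fun setT f -> (forall x, 0 <= f x) -> 0 <= c ->
  (\int[P]_x (f x + c)%:E = \int[P]_x (f x)%:E + c%:E)%E.
Proof.
move=> mf f_ge0 c_ge0.
under eq_integral do rewrite EFinD.
rewrite ge0_integralD //; last 2 first.
- by move=> x _; rewrite lee_fin.
- exact/measurable_EFinP.
rewrite integral_cst // -[c%:E in RHS]mule1.
by congr (_ + _ * _)%E; exact: probability_setT.
Qed.

Lemma probability_integral_le_affine {d} {T : measurableType d} {R : realType}
    (P : probability T R) {F S : T -> R} {B k m : R} :
  (forall x, F x <= B + k * (S x - m)) ->
  (\int[P]_x (S x)%:E <= m%:E)%E ->
  measurable_fun setT F -> measurable_fun setT S ->
  (forall x, 0 <= F x) -> (forall x, 0 <= S x) -> 0 <= B -> 0 <= k ->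
  (\int[P]_x (F x)%:E <= B%:E)%E.
Proof.
move=> F_le ES_le mF mS F_ge0 S_ge0 B_ge0 k_ge0.
have m_ge0 : 0 <= m.
  by rewrite -lee_fin (le_trans _ ES_le) // integral_ge0 // => x _; rewrite lee_fin.
have km_ge0 : 0 <= k * m := mulr_ge0 k_ge0 m_ge0.
have mkS : measurable_fun setT (fun x => k * S x).
  by apply: measurable_funM => //; exact: measurable_cst.
rewrite -(@leeD2rE _ (k * m)%:E) // -probability_integralD_cst //.
apply: (@le_trans _ _ (\int[P]_x (k * S x + B)%:E)%E).
  apply: ge0_le_integral => //.
  - by move=> x _; rewrite lee_fin addr_ge0.
  - by apply/measurable_EFinP; apply: measurable_funD => //; exact: measurable_cst.
  - by apply/measurable_EFinP; apply: measurable_funD => //; exact: measurable_cst.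
  - by move=> x _; rewrite lee_fin; move: (F_le x); rewrite mulrBr; lra.
rewrite probability_integralD_cst //; last by move=> x; rewrite mulr_ge0.
under eq_integral do rewrite EFinM.
rewrite ge0_integralZl_EFin //; last 2 first.
- by move=> x _; rewrite lee_fin.
- exact/measurable_EFinP.
by rewrite addeC leeD2l // EFinM lee_wpmul2l // lee_fin.
Qed.

Lemma measurable_big_nat d (T : measurableType d) (R : realType)
    (f : nat -> T -> R) (m n : nat) :
  (forall t, (m <= t)%N -> measurable_fun setT (f t)) ->
  measurable_fun setT (fun x => \sum_(m <= t < n) f t x).
Proof.
move=> mf; rewrite -[m]add0n; under eq_fun do rewrite big_addn.
by apply: measurable_sum => t; apply: mf; rewrite leq_addl.
Qed.

Lemma ge0_integral_big_nat d (T : measurableType d) (R : realType)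
    (mu : {measure set T -> \bar R}) (f : nat -> T -> R) (m n : nat) :
  (forall t, (m <= t)%N -> measurable_fun setT (f t)) ->
  (forall t x, (m <= t)%N -> 0 <= f t x) ->
  (\sum_(m <= t < n) \int[mu]_x (f t x)%:E = \int[mu]_x (\sum_(m <= t < n) f t x)%:E)%E.
Proof.
move=> mf f_ge0; rewrite -[m]add0n big_addn.
have mfm t : measurable_fun setT (EFin \o f (t + m)).
  by apply/measurable_EFinP/mf; rewrite leq_addl.
rewrite -(ge0_integral_sum _ measurableT mfm) => [|t x _]; last first.
  by rewrite lee_fin f_ge0 // leq_addl.
by apply: eq_integral => x _; rewrite big_addn sumEFin.
Qed.

Section RMSprop.
Context {d : measure_display} {Omega : measurableType d} {R : realType} {D : nat}.
Context (g : nat -> 'I_D -> Omega -> R) {b : R}.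
Hypothesis b01 : 0 < b < 1.

Lemma rms_v_ge0 t i x : 0 <= rms_v b g t i x.
Proof.
have /andP[b0 b1] := b01; elim: t => [|t IH] //=.
by rewrite addr_ge0 // mulr_ge0 // ?sqr_ge0 // ?subr_ge0 ltW.
Qed.

Lemma rms_ratio_sum_le_ln e T i x : 0 < e ->
  (1 - b) * \sum_(1 <= t < T.+1) (g t i x / Num.sqrt (rms_v b g t i x + e)) ^+ 2
    <= ln (1 + rms_v b g T i x / e) - T%:R * ln b.
Proof.
move=> e_gt0.
under eq_bigr do rewrite expr_div_n sqr_sqrtr ?addr_ge0 ?rms_v_ge0 ?ltW //.
exact: (@ema_ratio_sum_le R b e (fun t => g t i x ^+ 2) (fun t => rms_v b g t i x)
  b01 e_gt0 (fun t => sqr_ge0 _) erefl (fun t => erefl)).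
Qed.

Lemma rms_ratio_sum_le_affine e M T x : 0 < e -> 0 <= M ->
  \sum_(1 <= t < T.+1) \sum_(i < D) (g t i x / Num.sqrt (rms_v b g t i x + e)) ^+ 2
    <= D%:R / (1 - b) * (ln (1 + M / e) - T%:R * ln b)
       + ((1 - b) * (e + M))^-1 * (\sum_(i < D) rms_v b g T i x - D%:R * M).
Proof.
move=> e_gt0 M_ge0; have /andP[b0 b1] := b01.
have eM_gt0 : 0 < e + M by rewrite ltr_wpDr.
have c_gt0 : 0 < 1 + M / e by rewrite ltr_wpDr // divr_ge0 // ltW.
rewrite -(@ler_pM2l _ (1 - b)) ?subr_gt0 //.
have -> : (1 - b) * (D%:R / (1 - b) * (ln (1 + M / e) - T%:R * ln b)
       + ((1 - b) * (e + M))^-1 * (\sum_(i < D) rms_v b g T i x - D%:R * M))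
    = \sum_(i < D) (ln (1 + M / e) - T%:R * ln b + (rms_v b g T i x - M) / (e + M)).
  rewrite big_split /= sumr_const card_ord -mulr_suml sumrB sumr_const card_ord.
  rewrite -(mulr_natl (ln _ - _)) -(mulr_natl M).
  by field; rewrite ?gt_eqF ?subr_gt0.
rewrite exchange_big /= mulr_sumr; apply: ler_sum => i _.
apply: (le_trans (rms_ratio_sum_le_ln _ _ _ _ e_gt0)).
have y_gt0 : 0 < 1 + rms_v b g T i x / e by rewrite ltr_wpDr ?divr_ge0 ?rms_v_ge0 ?ltW.
have := ln_le_tangent _ _ y_gt0 c_gt0.
have -> : (1 + rms_v b g T i x / e - (1 + M / e)) / (1 + M / e)
    = (rms_v b g T i x - M) / (e + M) by field; rewrite ?gt_eqF.
lra.
Qed.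

Hypothesis mg : forall t i, (0 < t)%N -> measurable_fun setT (g t i).

Lemma measurable_rms_v t i : measurable_fun setT (rms_v b g t i).
Proof.
elim: t => [|t IH]; first exact: measurable_cst.
apply: measurable_funD; apply: measurable_funM => //; try exact: measurable_cst.
exact/measurable_funX/mg.
Qed.

Lemma measurable_rms_ratio t e : (0 < t)%N -> 0 < e ->
  measurable_fun setT
    (fun x => \sum_(i < D) (g t i x / Num.sqrt (rms_v b g t i x + e)) ^+ 2).
Proof.
move=> t_gt0 e_gt0; apply: measurable_sum => i.
apply/measurable_funX/measurable_funM; first exact: mg.
apply: measurable_funV_gt0 => [|x]; last by rewrite sqrtr_gt0 ltr_wpDl ?rms_v_ge0.
apply: (@measurableT_comp _ _ _ _ _ _ (@Num.sqrt R)).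
  exact: continuous_measurable_fun (@sqrt_continuous R).
by apply: measurable_funD => //; exact: measurable_rms_v.
Qed.

Context {P : probability Omega R} {G : R}.
Hypothesis hG : forall t, (0 < t)%N ->
  (\int[P]_x (\sum_(i < D) g t i x ^+ 2)%:E <= (G ^+ 2)%:E)%E.

Lemma integral_sum_rms_v_le t :
  (\int[P]_x (\sum_(i < D) rms_v b g t i x)%:E <= ((1 - b ^+ t) * G ^+ 2)%:E)%E.
Proof.
have /andP[b0 b1] := b01.
elim: t => [|t IH].
  under eq_integral do rewrite big1 //.
  by rewrite integral0 expr0 subrr mul0r.
pose S x := \sum_(i < D) rms_v b g t i x.
pose N x := \sum_(i < D) g t.+1 i x ^+ 2.
have SE x : \sum_(i < D) rms_v b g t.+1 i x = b * S x + (1 - b) * N x.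
  by rewrite /= big_split /= !mulr_sumr.
have mS : measurable_fun setT S by apply: measurable_sum => i; exact: measurable_rms_v.
have mN : measurable_fun setT N.
  by apply: measurable_sum => i; exact/measurable_funX/mg.
have S_ge0 x : 0 <= S x by apply: sumr_ge0 => i _; exact: rms_v_ge0.
have N_ge0 x : 0 <= N x by apply: sumr_ge0 => i _; exact: sqr_ge0.
have b1' : 0 <= 1 - b by rewrite subr_ge0 ltW.
under eq_integral do rewrite SE EFinD !EFinM.
rewrite ge0_integralD //; last 4 first.
- by move=> x _; rewrite -EFinM lee_fin mulr_ge0 // ltW.
- exact/measurable_funeM/measurable_EFinP.
- by move=> x _; rewrite -EFinM lee_fin mulr_ge0.
- exact/measurable_funeM/measurable_EFinP.
rewrite !ge0_integralZl_EFin ?(ltW b0) //; last 4 first.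
- by move=> x _; rewrite lee_fin.
- exact/measurable_EFinP.
- by move=> x _; rewrite lee_fin.
- exact/measurable_EFinP.
have ES := lee_wpmul2l (ltW b0 : (0 <= b%:E)%E) IH.
have EN := lee_wpmul2l (b1' : (0 <= (1 - b)%:E)%E) (hG _ (ltn0Sn t)).
apply: (le_trans (leeD ES EN)).
rewrite -!EFinM -EFinD lee_fin.
suff -> : b * ((1 - b ^+ t) * G ^+ 2) + (1 - b) * G ^+ 2 = (1 - b ^+ t.+1) * G ^+ 2 by [].
by rewrite (exprS b t); ring.
Qed.

End RMSprop.

Theorem lemmaG5 (d : measure_display) (Omega : measurableType d) (R : realType)
  (P : probability Omega R) (D : nat) (g : nat -> 'I_D -> Omega -> R)
  (beta2 eps G : R) (T : nat) :
  0 < beta2 < 1 -> 0 < eps ->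
  (forall t i, (0 < t)%N -> measurable_fun setT (g t i)) ->
  (forall t, (0 < t)%N ->
     (\int[P]_x (\sum_(i < D) (g t i x) ^+ 2)%:E <= (G ^+ 2)%:E)%E) ->
  (0 < T)%N ->
  (\sum_(1 <= t < T.+1)
      \int[P]_x (\sum_(i < D)
          (g t i x / Num.sqrt (rms_v beta2 g t i x + eps ^+ 2)) ^+ 2)%:E
   <= (D%:R / (1 - beta2) *
        (ln (1 + (1 - beta2 ^+ T) * G ^+ 2 / eps ^+ 2) - T%:R * ln beta2))%:E)%E.
Proof.
move=> b01 eps_gt0 mg hG _; have /andP[b0 b1] := b01.
have [D0 | D_gt0] := posnP D.
  subst D; rewrite !mul0r big1 // => t _.
  by under eq_integral do rewrite big_ord0; rewrite integral0.
set e := eps ^+ 2; set M := (1 - beta2 ^+ T) * G ^+ 2.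
have e_gt0 : 0 < e by rewrite exprn_gt0.
have M_ge0 : 0 <= M by rewrite mulr_ge0 ?sqr_ge0 // subr_ge0 exprn_ile1 // ltW.
have L_ge0 : 0 <= ln (1 + M / e) - T%:R * ln beta2.
  have : 0 <= ln (1 + M / e) by rewrite ln_ge0 // lerDl divr_ge0 // ltW.
  have : T%:R * ln beta2 <= 0 by rewrite mulr_ge0_le0 // ln_le0 // ltW.
  lra.
have ratio_ge0 t x : 0 <= \sum_(i < D) (g t i x / Num.sqrt (rms_v beta2 g t i x + e)) ^+ 2.
  by apply: sumr_ge0 => i _; exact: sqr_ge0.
have m_ratio t (t_gt0 : (0 < t)%N) := measurable_rms_ratio g b01 mg t e t_gt0 e_gt0.
rewrite ge0_integral_big_nat //.
apply: (probability_integral_le_affine P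
  (fun x => rms_ratio_sum_le_affine g b01 _ _ T x e_gt0 M_ge0)).
- apply: (le_trans (integral_sum_rms_v_le g b01 mg hG T)).
  by rewrite lee_fin ler_peMl // ler1n.
- exact: measurable_big_nat.
- by apply: measurable_sum => i; exact: measurable_rms_v.
- by move=> x; apply: sumr_ge0.
- by move=> x; apply: sumr_ge0 => i _; exact: rms_v_ge0.
- by rewrite mulr_ge0 // divr_ge0 // subr_ge0 ltW.
- by rewrite invr_ge0 mulr_ge0 // ?subr_ge0 ?addr_ge0 // ltW.
Qed.
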